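(* Let $R>0$, $s(z):=R^2-|z_1|^2-\dots-|z_n|^2$, $d\in\mathbb N^*$ and $y\in\mathcal H_d$. If $M_d(y)\succeq0$ and $M_{d-1}(sy)=0$, then $\operatorname{Tr}(M_d(y))\le y_{0,0}\sum_{l=0}^dR^{2l}$.
   Context: For $\alpha\in\mathbb N^n$, $|\alpha|=\sum\alpha_i$. $\mathcal H_d$ is the set of complex families $y=(y_{\alpha,\beta})_{|\alpha|,|\beta|\le d}$ with $\overline{y_{\alpha,\beta}}=y_{\beta,\alpha}$. For a real-valued complex polynomial $\varphi(z)=\sum_{|\gamma|,|\delta|\le l}\varphi_{\gamma,\delta}\bar z^\gamma z^\delta$ ($\overline{\varphi_{\gamma,\delta}}=\varphi_{\delta,\gamma}$) and an integer $e$ with $e+l\le d$, $M_e(\varphi y)$ is the Hermitian matrix indexed by $|\alpha|,|\beta|\le e$ with entries $\sum_{|\gamma|,|\delta|\le l}\varphi_{\gamma,\delta}y_{\alpha+\gamma,\beta+\delta}$; $M_d(y):=M_d(1\cdot y)$, i.e. entries $y_{\alpha,\beta}$. *)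

From HB Require Import structures.
From mathcomp Require Import all_boot all_order all_algebra.
Set Implicit Arguments. Unset Strict Implicit. Unset Printing Implicit Defensive.
Import Order.TTheory GRing.Theory Num.Theory.
Local Open Scope ring_scope.

Definition midx (n : nat) := {ffun 'I_n -> nat}.
Definition mdeg (n : nat) (a : midx n) : nat := (\sum_(i < n) a i)%N.
Definition madd (n : nat) (a b : midx n) : midx n := [ffun i => (a i + b i)%N].

Definition Mon (n d : nat) : finType :=
  {f : {ffun 'I_n -> 'I_d.+1} | (\sum_(i < n) (f i : nat) <= d)%N}.
Definition mi (n d : nat) (a : Mon n d) : midx n := [ffun i => (val a i : nat)].

(* A family y = (y_{alpha,beta}) is modelled as a function on pairs of
   multi-indices; only the values with |alpha|,|beta| <= d matter. *)
Definition hermitian_family (C : numClosedFieldType) (n d : nat)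
  (y : midx n -> midx n -> C) : Prop :=
  forall a b : Mon n d, y (mi b) (mi a) = (y (mi a) (mi b))^*.

(* Localizing matrix M_e(phi y), phi of bidegree <= l; M_d(y) = M_d(1 y). *)
Definition loc_mx (C : numClosedFieldType) (n e l : nat)
  (phi : midx n -> midx n -> C) (y : midx n -> midx n -> C)
  : 'M[C]_(#|{: Mon n e}|) :=
  \matrix_(i, j)
    \sum_(g : Mon n l) \sum_(h : Mon n l)
       phi (mi g) (mi h) *
       y (madd (mi (enum_val i)) (mi g)) (madd (mi (enum_val j)) (mi h)).

Definition mom_mx (C : numClosedFieldType) (n d : nat)
  (y : midx n -> midx n -> C) : 'M[C]_(#|{: Mon n d}|) :=
  \matrix_(i, j) y (mi (enum_val i)) (mi (enum_val j)).

(* Coefficients of s(z) = R^2 - sum_i conj(z_i) z_i, a polynomial of bidegree 1: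
   s_{0,0} = R^2, s_{e_i,e_i} = -1, all others 0. *)
Definition s_coef (C : numClosedFieldType) (n : nat) (R : C)
  (g h : midx n) : C :=
  if g == h then
    (if mdeg g == 0%N then R ^+ 2 else if mdeg g == 1%N then -1 else 0)
  else 0.

Definition psd_mx (C : numClosedFieldType) (N : nat) (A : 'M[C]_N) : Prop :=
  (map_mx (fun x : C => x^*) A)^T = A /\
  forall v : 'cV[C]_N, 0 <= ((map_mx (fun x : C => x^*) v)^T *m A *m v) 0 0.

Definition midx0 (n : nat) : midx n := [ffun => 0%N].

(* Write T_k for the sum of the diagonal moments y_{b,b} over |b| = k. The
   diagonal entry (a,a) of M_{d-1}(s y) = 0 reads
   R^2 y_{a,a} = sum_i y_{a+e_i,a+e_i}, so summing over |a| = k gives a sum of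
   diagonal moments of degree k+1 in which every b with |b| = k+1 occurs at
   least once. Positive semidefiniteness of M_d(y) makes all diagonal moments
   nonnegative, whence T_{k+1} <= R^2 T_k, T_k <= R^{2k} y_{0,0}, and the trace
   of M_d(y) is the sum of the T_k. *)
From HB Require Import structures.
From mathcomp Require Import all_boot all_order all_algebra.
Import Order.TTheory GRing.Theory Num.Theory.
Local Open Scope ring_scope.

Section Multiindices.
Set Implicit Arguments. Unset Strict Implicit.
Variable n : nat.

Lemma mi_inj d : injective (@mi n d).
Proof.
move=> a b /ffunP eq_ab; apply: val_inj; apply/ffunP=> i; apply: ord_inj.
by have := eq_ab i; rewrite !ffunE.
Qed.

Lemma leq_mdeg (m : midx n) i : (m i <= mdeg m)%N.
Proof. by rewrite /mdeg (bigD1 i) //= leq_addr. Qed.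

Lemma mdeg_mi d (b : Mon n d) : (mdeg (mi b) <= d)%N.
Proof.
rewrite /mdeg (eq_bigr (fun i => val b i : nat)); first exact: (valP b).
by move=> i _; rewrite ffunE.
Qed.

Lemma mdeg_madd (a b : midx n) : mdeg (madd a b) = (mdeg a + mdeg b)%N.
Proof. by rewrite /mdeg -big_split; apply: eq_bigr => i _; rewrite ffunE. Qed.

Lemma madd0m (m : midx n) : madd m (midx0 n) = m.
Proof. by apply/ffunP=> i; rewrite !ffunE addn0. Qed.

Lemma mdeg_midx0 : mdeg (midx0 n) = 0%N.
Proof. by rewrite /mdeg big1 // => i _; rewrite ffunE. Qed.

Lemma mdeg_eq0 (m : midx n) : mdeg m = 0%N -> m = midx0 n.
Proof.
move=> m0; apply/ffunP=> i; rewrite ffunE; apply/eqP.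
by rewrite -leqn0 -m0 leq_mdeg.
Qed.

Lemma mdeg_succ_split (m : midx n) k : mdeg m = k.+1 ->
  exists a e : midx n, [/\ mdeg a = k, mdeg e = 1%N & madd a e = m].
Proof.
move=> deg_m.
have [i m_i_gt0] : exists i, (0 < m i)%N.
  apply/existsP; apply: contraPT deg_m => /existsPn m0.
  by rewrite /mdeg big1 // => i _; apply/eqP; rewrite -leqn0 leqNgt m0.
pose e : midx n := [ffun j => nat_of_bool (j == i)].
have deg_e : mdeg e = 1%N.
  by rewrite /mdeg (bigD1 i) //= big1 ?ffunE ?eqxx // => j /negbTE; rewrite ffunE => ->.
have split_m : madd [ffun j => (m j - e j)%N] e = m.
  apply/ffunP=> j; rewrite !ffunE.
  by case: (eqVneq j i) => [->|_]; rewrite ?subnK ?subn0 ?addn0.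
exists [ffun j => (m j - e j)%N], e; split=> //.
by move: deg_m; rewrite -{1}split_m mdeg_madd deg_e addn1 => -[].
Qed.

(* The zero monomial serves as default value of the partial inverse of [mi]. *)
Lemma mon0_subproof d :
  (\sum_(i < n) (([ffun=> ord0] : {ffun 'I_n -> 'I_d.+1}) i : nat) <= d)%N.
Proof. by rewrite big1 // => i _; rewrite ffunE. Qed.

Definition mon_of d (m : midx n) : Mon n d :=
  insubd (exist _ [ffun=> ord0] (mon0_subproof d) : Mon n d)
    [ffun i => inord (m i) : 'I_d.+1].

Lemma mon_ofK d (m : midx n) : (mdeg m <= d)%N -> mi (mon_of d m) = m.
Proof.
move=> deg_m; have m_le i : (m i < d.+1)%N by rewrite ltnS (leq_trans (leq_mdeg m i)).
rewrite /mi /mon_of val_insubd.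
have -> : (\sum_(i < n) (([ffun i => inord (m i)] : {ffun 'I_n -> 'I_d.+1}) i : nat)
           <= d)%N.
  by rewrite (eq_bigr m) // => i _; rewrite ffunE inordK.
by apply/ffunP=> i; rewrite !ffunE inordK.
Qed.

Definition mon_shift d (p : Mon n d * Mon n 1) : Mon n d :=
  mon_of d (madd (mi p.1) (mi p.2)).

Lemma mi_mon_shift d k (p : Mon n d * Mon n 1) : (k < d)%N ->
  mdeg (mi p.1) = k -> mdeg (mi p.2) = 1%N -> mi (mon_shift p) = madd (mi p.1) (mi p.2).
Proof. by move=> lt_kd deg1 deg2; rewrite mon_ofK // mdeg_madd deg1 deg2 addn1. Qed.

Lemma mon_shift_surj d k (b : Mon n d) : mdeg (mi b) = k.+1 ->
  exists p : Mon n d * Mon n 1,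
    [&& mdeg (mi p.1) == k, mdeg (mi p.2) == 1%N & mon_shift p == b].
Proof.
move=> /[dup] deg_b /mdeg_succ_split[a [e [deg_a deg_e split_b]]].
have lt_kd : (k < d)%N by rewrite -deg_b mdeg_mi.
have mi_a : mi (mon_of d a) = a by rewrite mon_ofK // deg_a ltnW.
have mi_e : mi (mon_of 1 e) = e by rewrite mon_ofK // deg_e.
exists (mon_of d a, mon_of 1 e); rewrite /= mi_a mi_e deg_a deg_e !eqxx /=.
by apply/eqP/mi_inj; rewrite (mi_mon_shift lt_kd) /= ?mi_a ?mi_e.
Qed.

End Multiindices.

Lemma psd_mx_diag_ge0 (C : numClosedFieldType) N (A : 'M[C]_N) i :
  psd_mx A -> 0 <= A i i.
Proof.
case=> _ /(_ (delta_mx i 0)).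
have -> : map_mx (fun x : C => x^*) (delta_mx i 0 : 'cV[C]_N) = delta_mx i 0.
  by apply/matrixP=> j k; rewrite !mxE; case: (_ && _); rewrite ?conjC1 ?conjC0.
by rewrite trmx_delta -rowE -colE !mxE.
Qed.

Section MomentMatrix.
Set Implicit Arguments. Unset Strict Implicit.
Variables (C : numClosedFieldType) (n d : nat) (y : midx n -> midx n -> C).

Lemma mom_mx_diag_ge0 (b : Mon n d) : psd_mx (mom_mx d y) -> 0 <= y (mi b) (mi b).
Proof. by move/(psd_mx_diag_ge0 (enum_rank b)); rewrite mxE enum_rankK. Qed.

Definition deg_diag_sum k : C := \sum_(b : Mon n d | mdeg (mi b) == k) y (mi b) (mi b).

Lemma deg_diag_sum0 : deg_diag_sum 0 = y (midx0 n) (midx0 n).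
Proof.
have mi0 : mi (mon_of d (midx0 n)) = midx0 n by rewrite mon_ofK ?mdeg_midx0.
rewrite /deg_diag_sum (bigD1 (mon_of d (midx0 n))) /= ?mi0 ?mdeg_midx0 //.
rewrite big1 ?addr0 // => b /andP[/eqP/mdeg_eq0 b0 /eqP[]].
by apply: mi_inj; rewrite mi0.
Qed.

Lemma mxtrace_mom_mx : \tr (mom_mx d y) = \sum_(k < d.+1) deg_diag_sum k.
Proof.
rewrite /mxtrace (reindex (@enum_rank _)) /=; last first.
  by exists (@enum_val _ _) => b _; rewrite ?enum_rankK ?enum_valK.
under eq_bigr do rewrite mxE enum_rankK.
rewrite (partition_big (fun b : Mon n d => inord (mdeg (mi b)) : 'I_d.+1) predT) //=.
apply: eq_bigr => k _; apply: eq_bigl => b.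
have deg_b : (mdeg (mi b) < d.+1)%N by rewrite ltnS mdeg_mi.
by apply/eqP/eqP => [<-|->]; rewrite ?inordK //; apply: ord_inj; rewrite inordK.
Qed.

End MomentMatrix.

Section Localizing.
Set Implicit Arguments. Unset Strict Implicit.
Variables (C : numClosedFieldType) (n : nat) (R : C).

Lemma loc_mx_s_diag e (y : midx n -> midx n -> C) (a : midx n) :
  loc_mx e 1 (s_coef R) y = 0 -> (mdeg a <= e)%N ->
  R ^+ 2 * y a a = \sum_(g : Mon n 1 | mdeg (mi g) == 1%N) y (madd a (mi g)) (madd a (mi g)).
Proof.
(* Only the diagonal coefficients s_{0,0} = R^2 and s_{e_i,e_i} = -1 are nonzero. *)
move=> + /mon_ofK <-; set a' := mon_of e a; clearbody a'.
move/matrixP/(_ (enum_rank a') (enum_rank a')); rewrite !mxE enum_rankK.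
have s_offdiag g h : h != g -> s_coef R (mi g) (mi h) = 0.
  by move=> neq_hg; rewrite /s_coef (inj_eq (@mi_inj _ _)) eq_sym (negbTE neq_hg).
rewrite (eq_bigr (fun g => s_coef R (mi g) (mi g) * y (madd (mi a') (mi g)) (madd (mi a') (mi g))));
  last by move=> g _; rewrite (bigD1 g) //= big1 ?addr0 // => h /s_offdiag ->; rewrite mul0r.
pose g0 := mon_of 1 (midx0 n).
have mi_g0 : mi g0 = midx0 n by rewrite mon_ofK // mdeg_midx0.
rewrite (bigD1 g0) //= /s_coef eqxx mi_g0 mdeg_midx0 madd0m.
move/eqP; rewrite addr_eq0 => /eqP ->.
rewrite -sumrN big_mkcond [RHS]big_mkcond /=; apply: eq_bigr => g _.
rewrite eqxx; case: eqP => [->|neq_g0]; first by rewrite mi_g0 mdeg_midx0.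
have [/mdeg_eq0 g_0|_] := eqP; first by case: neq_g0; apply: mi_inj; rewrite mi_g0.
by case: (_ == 1%N); rewrite ?mulN1r ?opprK ?mul0r ?oppr0.
Qed.

Variables (d : nat) (y : midx n -> midx n -> C).
Hypotheses (y_psd : psd_mx (mom_mx d y)) (y_loc : loc_mx d.-1 1 (s_coef R) y = 0).

Lemma deg_diag_sumS_le k : (k < d)%N ->
  deg_diag_sum d y k.+1 <= R ^+ 2 * deg_diag_sum d y k.
Proof.
move=> lt_kd; rewrite /deg_diag_sum mulr_sumr.
rewrite [X in _ <= X](eq_bigr (fun b : Mon n d => \sum_(g : Mon n 1 | mdeg (mi g) == 1%N)
    y (madd (mi b) (mi g)) (madd (mi b) (mi g)))) => [|b /eqP deg_b]; last first.
  by rewrite (loc_mx_s_diag y_loc) // deg_b -ltnS prednK // (leq_ltn_trans _ lt_kd).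
rewrite pair_big /=.
rewrite (eq_bigr (fun p => y (mi (mon_shift p)) (mi (mon_shift p)))); last first.
  by move=> p /andP[/eqP deg1 /eqP deg2]; rewrite (mi_mon_shift lt_kd).
rewrite (partition_big (@mon_shift n d) (fun b => mdeg (mi b) == k.+1)) /=; last first.
  by move=> p /andP[/eqP deg1 /eqP deg2]; rewrite (mi_mon_shift lt_kd) // mdeg_madd deg1 deg2 addn1.
apply: ler_sum => b /eqP/mon_shift_surj[p /and3P[deg1 deg2 /eqP <-]].
rewrite (bigD1 p) /=; last by rewrite deg1 deg2 eqxx.
rewrite lerDl; apply: sumr_ge0 => q _; exact: mom_mx_diag_ge0.
Qed.

Lemma deg_diag_sum_le k : 0 <= R -> (k <= d)%N ->
  deg_diag_sum d y k <= R ^+ (2 * k) * y (midx0 n) (midx0 n).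
Proof.
move=> R_ge0; elim: k => [|k IHk] le_kd; first by rewrite mul1r deg_diag_sum0.
apply: le_trans (deg_diag_sumS_le le_kd) _.
rewrite mulnS exprD -mulrA ler_wpM2l ?exprn_ge0 //.
exact: IHk (ltnW le_kd).
Qed.

End Localizing.

Theorem mainTheorem8 (C : numClosedFieldType) (n : nat) (R : C) (d : nat)
  (y : midx n -> midx n -> C) :
  0 < R -> (0 < d)%N ->
  hermitian_family d y ->
  psd_mx (mom_mx d y) ->
  loc_mx d.-1 1 (s_coef R) y = 0 ->
  \tr (mom_mx d y) <= y (midx0 n) (midx0 n) * \sum_(l < d.+1) R ^+ (2 * l).
Proof.
move=> R_gt0 _ _ y_psd y_loc.
rewrite mxtrace_mom_mx mulr_sumr; apply: ler_sum => k _.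
by rewrite mulrC deg_diag_sum_le ?ltW // -ltnS.
Qed.
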